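(* Let $n \geq 1$ and let $D_m'$ (for $m \ge 1$) be the digraphs defined in the context. Then $D_n'$ has no induced directed cycle of odd length at least $5$, $\omega(D_n') \leq 3$, and $\vec{\chi}(D_{4n}') \geq n$.
   Context: Digraphs $D_m$ are defined recursively. $D_1$ is a single vertex with no edges. For $m \geq 2$, take $m-1$ disjoint copies $D_{m-1}^1,\dots,D_{m-1}^{m-1}$ of $D_{m-1}$; let $\mathcal{T}$ be the set of all sequences $T=(x_1,\dots,x_{m-1})$ with $x_i \in V(D_{m-1}^i)$ for each $i$. For each $T \in \mathcal{T}$ add a new vertex $v_T$ and, for each $i \in \{1,\dots,m-1\}$, an edge from $x_i$ to $v_T$. The resulting digraph is $D_m$. It is a known fact that $D_m$ is acyclic and that for any two vertices $u,v$ of $D_m$ there is at most one directed path from $u$ to $v$ in $D_m$. The length of a path is its number of edges. The digraph $D_m'$ has $V(D_m')=V(D_m)$ and, for every ordered pair $(u,v)$ of vertices such that there is a directed path in $D_m$ from $u$ to $v$: if that path has length $\equiv 1 \pmod 3$, $D_m'$ has the edge $uv$; if that path has length $\equiv 2 \pmod 3$, $D_m'$ has the edge $vu$. $D_m'$ has no other edges. The clique number $\omega(D)$ of a digraph is the clique number of its underlying undirected graph (same vertices, $u,v$ adjacent iff $uv$ or $vu$ is an edge). A digraph is acyclic if it has no directed cycle; $\vec{\chi}(D)$, the dichromatic number, is the least $k$ such that $V(D)$ can be partitioned into $k$ sets each inducing an acyclic subdigraph. An induced directed cycle is a directed cycle $v_1\cdots v_\ell v_1$ whose vertex set induces exactly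 the edges $v_iv_{i+1}$ (indices mod $\ell$). *)

From HB Require Import structures.
From mathcomp Require Import all_boot.
Set Implicit Arguments. Unset Strict Implicit. Unset Printing Implicit Defensive.

Definition dipath (T : finType) (E : rel T) (u v : T) (l : nat) : Prop :=
  exists s : seq T, [/\ path E u s, last u s = v, uniq (u :: s) & size s = l].

Definition dicycle (T : Type) (E : T -> T -> Prop) (l : nat) (c : 'I_l -> T) : Prop :=
  0 < l /\ injective c /\ forall i : 'I_l, E (c i) (c (ordS i)).

Definition induced_dicycle (T : Type) (E : T -> T -> Prop) (l : nat) (c : 'I_l -> T) : Prop :=
  dicycle E c /\ forall i j : 'I_l, E (c i) (c j) -> j = ordS i.

Definition acyclic_on (T : finType) (E : T -> T -> Prop) (A : {set T}) : Prop :=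
  forall (l : nat) (c : 'I_l -> T), (forall i, c i \in A) -> ~ dicycle E c.

Definition acyclic_colorable (T : finType) (E : T -> T -> Prop) (k : nat) : Prop :=
  exists f : T -> 'I_k, forall i : 'I_k, acyclic_on E [set x | f x == i].

Definition dichromatic_ge (T : finType) (E : T -> T -> Prop) (n : nat) : Prop :=
  forall k, acyclic_colorable E k -> n <= k.

Definition clique (T : finType) (E : T -> T -> Prop) (S : {set T}) : Prop :=
  forall u v, u \in S -> v \in S -> u != v -> E u v \/ E v u.

Definition clique_number_le (T : finType) (E : T -> T -> Prop) (k : nat) : Prop :=
  forall S : {set T}, clique E S -> #|S| <= k.

(* Dvert k is the vertex type of D_{k+1}.
   D_1 : a single vertex.
   D_{k+2} : k+1 copies of D_{k+1} (inl (i, x) = vertex x of copy i), plus a new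
   vertex v_T (inr T) for every T = (x_1,...,x_{k+1}) with x_i in copy i. *)
Fixpoint Dvert (k : nat) : finType :=
  match k with
  | 0 => unit
  | k'.+1 => (('I_k'.+1 * Dvert k') + {ffun 'I_k'.+1 -> Dvert k'})%type
  end.

Fixpoint Dedge (k : nat) : rel (Dvert k) :=
  match k return rel (Dvert k) with
  | 0 => fun _ _ => false
  | k'.+1 => fun x y =>
      match x, y with
      | inl (i, a), inl (j, b) => (i == j) && @Dedge k' a b
      | inl (i, a), inr T => T i == a
      | _, _ => false
      end
  end.

(* D_m for m >= 1 *)
Definition DV (m : nat) : finType := Dvert m.-1.
Definition DE (m : nat) : rel (DV m) := @Dedge m.-1.

Definition DE' (m : nat) (u v : DV m) : Prop :=
  (exists l, dipath (@DE m) u v l /\ l %% 3 = 1) \/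
  (exists l, dipath (@DE m) v u l /\ l %% 3 = 2).

(* Every vertex of D_m has a level (copies keep it, the new vertex of D_{k+1} gets
   level k), edges raise it, and by induction on m any two walks between the same
   vertices have the same length.  Hence each adjacency of D_m' records the residue
   mod 3 of a well-defined walk length, and residues add along concatenated walks.
   In an induced cycle of D_m' two consecutive edges cannot both follow D_m, nor
   both go against it, since either would produce the chord from c_{i+2} to c_i;
   so the orientations alternate and the cycle is even.  In a clique all vertices
   are reached from the lowest one, with pairwise distinct residues, so there are
   at most three.  Finally D_m needs m colours in a proper colouring, and an
   acyclic colouring of D_m' with k colours yields one of D_m with 2k colours. *)

From mathcomp Require Import all_boot zify.
From Stdlib Require Import Classical IndefiniteDescription.
Set Implicit Arguments. Unset Strict Implicit. Unset Printing Implicit Defensive.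

Fixpoint level (k : nat) : Dvert k -> nat :=
  match k return Dvert k -> nat with
  | 0 => fun _ => 0
  | k'.+1 => fun x => match x with inl (_, a) => @level k' a | inr _ => k'.+1 end
  end.

Lemma level_le k (x : Dvert k) : level x <= k.
Proof.
elim: k x => [//|k IH] [[i a]|T] //=.
exact: leq_trans (IH a) (leqnSn k).
Qed.

Lemma level_edge k (x y : Dvert k) : Dedge x y -> level x < level y.
Proof.
elim: k x y => [//|k IH] [[i a]|T] [[j b]|T'] //=.
- by case/andP => _ /IH.
- by move=> _; rewrite ltnS level_le.
Qed.

Definition walk k (u v : Dvert k) (e : nat) : Prop :=
  exists s, [/\ path (@Dedge k) u s, last u s = v & size s = e].

Section Walks.
Variable k : nat.
Implicit Types u v w : Dvert k.

Lemma walk0 u : walk u u 0.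
Proof. by exists [::]. Qed.

Lemma walk1 u v : Dedge u v -> walk u v 1.
Proof. by move=> E; exists [:: v]; rewrite /= E. Qed.

Lemma walk_cat u v w a b : walk u v a -> walk v w b -> walk u w (a + b).
Proof.
case=> s [P L S] [t [P' L' S']]; exists (s ++ t).
by rewrite cat_path last_cat size_cat L P P' S S'.
Qed.

Lemma walk_level u v e : walk u v e -> level u + e <= level v.
Proof.
case=> s [P <- <-]; elim: s u P => [|y s IH] u /=; first by rewrite addn0.
by case/andP => /level_edge Luy /IH; lia.
Qed.

(* Levels strictly increase along edges, so a walk never repeats a vertex. *)
Lemma walk_dipath u v e : walk u v e <-> dipath (@Dedge k) u v e.
Proof.
split; last by case=> s [? ? ? ?]; exists s.
case=> s [P L S]; exists s; split => //.
have: sorted ltn (map (@level k) (u :: s)).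
  by rewrite /= (homo_path (e := @Dedge k)) //; apply: level_edge.
by rewrite ltn_sorted_uniq_leq => /andP [/map_uniq].
Qed.

End Walks.

Lemma walk_to_inl k (i : 'I_k.+1) (x : Dvert k) (u : Dvert k.+1) e :
  walk u (inl (i, x)) e -> exists2 a, u = inl (i, a) & walk a x e.
Proof.
case=> s [P L <-]; elim: s u P L => [|y s IH] u /=.
  by move=> _ ->; exists x => //; apply: walk0.
case/andP => E P L; case: (IH y P L) => b Y [t [P' L' St]]; subst y.
move: E; case: u => [[j a]|T] //= /andP [/eqP -> E].
by exists a => //; exists (b :: t); rewrite /= E P' L' St.
Qed.

Lemma walk_to_inr k (T : {ffun 'I_k.+1 -> Dvert k}) (u : Dvert k.+1) e :
  walk u (inr T) e ->
  (e = 0 /\ u = inr T) \/ exists j e', e = e'.+1 /\ walk u (inl (j, T j)) e'.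
Proof.
case=> s [P L <-]; case/lastP: s P L => [|s y]; first by move=> _ /= ->; left.
rewrite rcons_path last_rcons size_rcons => /andP [P E] Y; subst y; right.
move: E; case H: (last u s) => [[j b]|T'] //= /eqP E.
by exists j, (size s); split => //; exists s; rewrite H E.
Qed.

Lemma walk_length_uniq k (u v : Dvert k) a b : walk u v a -> walk u v b -> a = b.
Proof.
elim: k u v a b => [|k IH] u v a b.
  by case=> [[|? ?] [? ? <-]] [[|? ?] [? ? <-]].
case: v => [[i x]|T].
  move=> /walk_to_inl [a1 -> Wa] /walk_to_inl [a2 [<-] Wb]; exact: IH Wa Wb.
case/walk_to_inr=> [[-> ->]|[j [a' [-> Wa]]]];
case/walk_to_inr=> [[-> Eu]|[j' [b' [-> Wb]]]] //.
- by case/walk_to_inl: Wb.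
- by move: Wa; rewrite Eu => /walk_to_inl [].
case/walk_to_inl: Wa Wb => a1 -> Wa /walk_to_inl [a2 [E1 E2] Wb].
by subst j' a2; rewrite (IH _ _ _ _ Wa Wb).
Qed.

Definition walk_mod3 k (u v : Dvert k) (r : nat) : Prop :=
  exists2 e, walk u v e & e = r %[mod 3].

Section WalkResidues.
Variable k : nat.
Implicit Types u v w : Dvert k.

Lemma walk_mod3_cat u v w a b :
  walk_mod3 u v a -> walk_mod3 v w b -> walk_mod3 u w (a + b).
Proof.
case=> e1 W1 E1 [e2 W2 E2]; exists (e1 + e2); first exact: walk_cat W1 W2.
by rewrite -modnDm E1 E2 modnDm.
Qed.

Lemma walk_mod3_uniq u v a b : walk_mod3 u v a -> walk_mod3 u v b -> a = b %[mod 3].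
Proof. by case=> e1 W1 <- [e2 W2 <-]; rewrite (walk_length_uniq W1 W2). Qed.

End WalkResidues.

Lemma DE'_walk_mod3 m (u v : DV m) :
  DE' u v <-> walk_mod3 u v 1 \/ walk_mod3 v u 2.
Proof.
rewrite /DE' /DE /DV.
split; [case=> [[e [W E]]|[e [W E]]] | case=> [[e W E]|[e W E]]].
- by left; exists e => //; apply/walk_dipath.
- by right; exists e => //; apply/walk_dipath.
- by left; exists e; split => //; apply/walk_dipath.
- by right; exists e; split => //; apply/walk_dipath.
Qed.

Lemma iter_ordS l (i : 'I_l) m : val (iter m (@ordS l) i) = (i + m) %% l.
Proof.
elim: m => [|m IH] /=; first by rewrite addn0 modn_small.
by rewrite IH /= -addn1 modnDml addn1 addnS.
Qed.

Lemma ordS3_neq l (i : 'I_l) : 3 < l -> ordS (ordS (ordS i)) != i.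
Proof.
move=> l_gt3; apply/eqP => /(congr1 val).
rewrite -[ordS _]/(iter 3 (@ordS l) i) iter_ordS /=.
have := ltn_ord i; case: (ltnP (i + 3) l) => [lt_i3 _|le_i3 lt_il].
  by rewrite modn_small //; lia.
by rewrite -(subnK le_i3) modnDr modn_small; lia.
Qed.

Lemma odd_cycle_not_alternating l (P : 'I_l -> Prop) :
  odd l -> ~ (forall i, P (ordS i) <-> ~ P i).
Proof.
move=> odd_l alt; have l_gt0 : 0 < l by case: l odd_l {P alt}.
pose i0 := Ordinal l_gt0.
have iterP m : P (iter m (@ordS l) i0) <-> (if odd m then ~ P i0 else P i0).
  elim: m => [|m IH] //=; rewrite alt.
  by case: (odd m) IH => /=; case: (classic (P i0)); tauto.
have iter_l : iter l (@ordS l) i0 = i0.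
  by apply: val_inj; rewrite iter_ordS /= add0n modnn.
by move: (iterP l); rewrite iter_l odd_l; case: (classic (P i0)); tauto.
Qed.

Lemma no_odd_induced_dicycle m l (c : 'I_l -> DV m) :
  odd l -> 5 <= l -> ~ induced_dicycle (@DE' m) c.
Proof.
move=> odd_l l_ge5 [[_ [_ cycle_c]] induced_c].
pose up i := walk_mod3 (c i) (c (ordS i)) 1.
pose down i := walk_mod3 (c (ordS i)) (c i) 2.
have up_or_down i : up i \/ down i by apply/DE'_walk_mod3.
have no_chord i : ~ DE' (c (ordS (ordS i))) (c i).
  by move/induced_c/eqP; rewrite eq_sym; apply/negP/ordS3_neq; lia.
have not_up2 i : up i -> ~ up (ordS i).
  move=> U1 U2; apply: (no_chord i); apply/DE'_walk_mod3; right.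
  exact: walk_mod3_cat U1 U2.
have not_down2 i : down i -> ~ down (ordS i).
  move=> D1 D2; apply: (no_chord i); apply/DE'_walk_mod3; left.
  exact: walk_mod3_cat D2 D1.
apply: (odd_cycle_not_alternating (P := up) odd_l) => i; split.
  by move=> U2 U1; apply: not_up2 U1 U2.
move=> nU1; have D1 : down i by case: (up_or_down i).
by case: (up_or_down (ordS i)) => // /(not_down2 _ D1).
Qed.

Lemma card_le_of_functional_rel (T : finType) (k : nat) (S : {set T})
    (R : T -> 'I_k -> Prop) :
  (forall x, x \in S -> exists r, R x r) ->
  (forall x y r, x \in S -> y \in S -> R x r -> R y r -> x = y) ->
  #|S| <= k.
Proof.
move=> total functional.
pose choose_r (x : {x | x \in S}) := constructive_indefinite_description _ (total _ (valP x)).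
pose f x := proj1_sig (choose_r x).
have inj_f : injective f.
  move=> x y Efxy; apply: val_inj; apply: (functional _ _ (f x) (valP x) (valP y)).
    exact: proj2_sig (choose_r x).
  by rewrite Efxy; apply: proj2_sig (choose_r y).
by rewrite -(card_ord k) -(card_sig (mem S)); apply: leq_card inj_f.
Qed.

Lemma walk_mod3_from_same_residue k (r x y : Dvert k) i d :
  walk_mod3 r x i -> walk_mod3 r y i -> walk_mod3 x y d -> d = 0 %[mod 3].
Proof.
by move=> Wx Wy /(walk_mod3_cat Wx) /(walk_mod3_uniq Wy); lia.
Qed.

Lemma clique_number_le3 m : clique_number_le (@DE' m) 3.
Proof.
move=> S clique_S.
have [-> | [x0 Sx0]] := set_0Vmem S; first by rewrite cards0.
case: (arg_minnP (@level m.-1) Sx0) => r Sr r_min.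
have residue_diff x y i : x \in S -> y \in S -> x != y ->
    walk_mod3 r x i -> walk_mod3 r y i -> False.
  move=> Sx Sy neq_xy Wx Wy.
  have sep := @walk_mod3_from_same_residue m.-1 r.
  by case: (clique_S x y Sx Sy neq_xy) => [|] /DE'_walk_mod3 [W|W];
    [move: (sep _ _ _ _ Wx Wy W) | move: (sep _ _ _ _ Wy Wx W)
    | move: (sep _ _ _ _ Wy Wx W) | move: (sep _ _ _ _ Wx Wy W)].
apply: (card_le_of_functional_rel (R := fun x (i : 'I_3) => walk_mod3 r x i)).
  move=> x Sx; have [e Wre] : exists e, walk r x e.
    have [<-|neq_rx] := eqVneq r x; first by exists 0; apply: walk0.
    have low_r := r_min x Sx.
    by case: (clique_S r x Sr Sx neq_rx) => [|] /DE'_walk_mod3 [] [e W E];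
      [exists e | move: (walk_level W); lia | move: (walk_level W); lia | exists e].
  by exists (Ordinal (ltn_pmod e (isT : 0 < 3))); exists e; rewrite ?modn_mod.
move=> x y i Sx Sy Wx Wy; apply/eqP; apply: contraT => neq_xy.
by case: (residue_diff x y i Sx Sy neq_xy Wx Wy).
Qed.

Lemma distinct_representatives (D C : finType) (x0 : D) (f : nat -> D -> C) n :
  (forall i, i < n -> n <= #|[set f i x | x : D]|) ->
  exists t : nat -> D, {in [pred i | i < n] &, injective (fun i => f i (t i))}.
Proof.
elim: n => [|n IH] large_images; first by exists (fun=> x0).
have [t inj_t] : exists t : nat -> D, {in [pred i | i < n] &, injective (fun i => f i (t i))}.
  by apply: IH => i lt_in; apply: ltnW; apply: large_images; apply: ltnW.
pose used := [set f i (t i) | i : 'I_n].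
have [a fresh_a] : exists a, f n a \notin used.
  case: (pickP (fun a => f n a \notin used)) => [a fresh|all_used]; first by exists a.
  have : #|[set f n x | x : D]| <= #|used|.
    by apply/subset_leq_card/subsetP => _ /imsetP [x _ ->]; move/negbFE: (all_used x).
  have : #|used| <= n by apply: leq_trans (leq_imset_card _ _) _; rewrite card_ord.
  by have := large_images n (ltnSn n); lia.
exists (fun i => if i == n then a else t i) => i j; rewrite !inE => lt_i lt_j.
have [-> | ne_in] := eqVneq i n; have [-> | ne_jn] := eqVneq j n => //=.
- have lt_jn : j < n by lia.
  by move=> E; case/negP: fresh_a; apply/imsetP; exists (Ordinal lt_jn); rewrite ?E.
- have lt_in : i < n by lia.
  by move=> E; case/negP: fresh_a; apply/imsetP; exists (Ordinal lt_in); rewrite ?E.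
- by apply: inj_t; rewrite inE; lia.
Qed.

Lemma proper_coloring_card k (C : finType) (g : Dvert k -> C) :
  (forall x y, Dedge x y -> g x != g y) -> k < #|[set g x | x : Dvert k]|.
Proof.
elim: k C g => [|k IH] C g proper.
  by rewrite card_gt0; apply/set0Pn; exists (g tt); apply/imsetP; exists tt.
pose f i x := g (inl (inord i, x)).
have copy_colors i : i < k.+1 -> k.+1 <= #|[set f i x | x : Dvert k]|.
  by move=> _; apply: IH => x y E; apply: proper; rewrite /= eqxx.
have [_ /imsetP [x0 _ _]] := card_gt0P (leq_ltn_trans (leq0n k) (copy_colors 0 isT)).
have [t inj_t] := distinct_representatives x0 copy_colors.
pose T := [ffun i : 'I_k.+1 => t i].
pose colors := [set g (inl (i, T i)) | i : 'I_k.+1].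
have card_colors : #|colors| = k.+1.
  rewrite card_imset ?card_ord // => i j /=; rewrite !ffunE => E.
  by apply: val_inj; apply: inj_t; rewrite ?inE ?ltn_ord // /f !inord_val.
have top_fresh : g (inr T) \notin colors.
  apply/imsetP => -[i _ E].
  by have := proper (inl (i, T i)) (inr T); rewrite /= eqxx E eqxx => /(_ isT).
apply: leq_trans (_ : #|g (inr T) |: colors| <= _).
  by rewrite cardsU1 top_fresh card_colors.
apply/subset_leq_card/subsetP => c; rewrite in_setU1.
by case/predU1P => [->|/imsetP [i _ ->]]; apply/imsetP; eexists.
Qed.

Lemma DE'_triangle m (w x y : DV m) :
  DE w x -> DE x y -> dicycle (@DE' m) (fun i : 'I_3 => nth w [:: w; x; y] i).
Proof.
move=> Ewx Exy; have lwx := level_edge Ewx; have lxy := level_edge Exy.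
split=> //; split.
  move=> [[|[|[|i]]] lt_i] [[|[|[|j]]] lt_j] //= E; apply: val_inj => //=;
    by move: lwx lxy; rewrite E; lia.
case=> [[|[|[|i]]] lt_i] //=; apply/DE'_walk_mod3.
- by left; exists 1 => //; apply: walk1.
- by left; exists 1 => //; apply: walk1.
- by right; exists 2 => //; apply: walk_cat (walk1 Ewx) (walk1 Exy).
Qed.

(* Refining an acyclic colouring by "has an in-neighbour of its own colour" yields
   a proper colouring of D_m: a monochromatic D-path w x y is a triangle of D_m'. *)
Lemma dichromatic_ge_half m n : 2 * n <= m -> dichromatic_ge (@DE' m) n.
Proof.
move=> le_2n_m k [f acyclic_f].
pose g (x : DV m) := (f x, [exists w, DE w x && (f w == f x)]).
have proper_g (x y : DV m) : DE x y -> g x != g y.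
  move=> Exy; apply/negP => /eqP [Efxy Eb].
  have : [exists w, DE w y && (f w == f y)].
    by apply/existsP; exists x; rewrite Efxy eqxx andbT.
  rewrite -Eb => /existsP [w /andP [Ewx /eqP Efwx]].
  apply: (acyclic_f (f w) 3 _ _ (DE'_triangle Ewx Exy)).
  by case=> [[|[|[|i]]] lt_i] //=; rewrite inE -?Efxy ?Efwx.
have : #|[set g x | x : Dvert m.-1]| <= k * 2.
  by apply: leq_trans (max_card _) _; rewrite card_prod card_ord card_bool.
by have := proper_coloring_card proper_g; lia.
Qed.

Theorem mainTheorem6 (n : nat) : 1 <= n ->
  (forall (l : nat) (c : 'I_l -> DV n), odd l -> 5 <= l -> ~ induced_dicycle (@DE' n) c)
  /\ clique_number_le (@DE' n) 3
  /\ dichromatic_ge (@DE' (4 * n)) n.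
Proof.
move=> _; split; first exact: no_odd_induced_dicycle.
split; first exact: clique_number_le3.
by apply: dichromatic_ge_half; lia.
Qed.
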